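(* Assume Assumption 1 and Assumption 2 with $\delta>1/10$. For any distinct $u,u_1,u_2\in L$, as $n_R\to\infty$, $$\Pr[(u,u_1),(u,u_2),(u_1,u_2)\in E\mid S_L,S_R]=p_{uu_1}p_{uu_2}\cdot\frac{M_{R1}M_{R3}}{M_{R2}^2}\cdot\frac1{w_u}\,(1+o(1))+o(p_{uu_1}p_{uu_2}),$$ where $p_{xy}=\frac{M_{R2}}{M_{R1}^2}\cdot\frac{w_xw_y}{n_R}$.
   Context: Model: left nodes $L$ ($|L|=n_L$), right nodes $R$ ($|R|=n_R$), weight sequences $S_L=(w_u)_{u\in L}$, $S_R=(w_v)_{v\in R}$ of positive reals; $M_{Lk}=\frac1{n_L}\sum_{u\in L}w_u^k$, $M_{Rk}=\frac1{n_R}\sum_{v\in R}w_v^k$. The random bipartite graph $G_b=(L\sqcup R,E_b)$ contains each edge $(u,v)$, $u\in L$, $v\in R$, independently with probability $\min\left(\frac{w_uw_v}{n_RM_{R1}},1\right)$. The projected graph is $G=(L,E)$ with $(u,u')\in E$ for distinct $u,u'\in L$ iff there is $z\in R$ with $(u,z),(u',z)\in E_b$. Assumption 1: $\frac{w_uw_v}{n_RM_{R1}}\le1$ for all $u\in L,v\in R$. Assumption 2 (parameter $\delta>0$), as $n_L,n_R\to\infty$: $\max(S_L\cup S_R)=O(n_R^{1/2-\delta})$, $\min S_L=\Omega(1)$, $M_{R2}=O(M_{R1}^2)$, $M_{R4}=O(n_R^{1-2\delta})$. *)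

From HB Require Import structures.
From mathcomp Require Import all_boot all_order all_algebra.
From mathcomp Require Import all_classical all_reals all_analysis.
Set Implicit Arguments. Unset Strict Implicit. Unset Printing Implicit Defensive.
Import Order.TTheory GRing.Theory Num.Theory.
Import numFieldNormedType.Exports.
Local Open Scope ring_scope.

Section Model.
Variable R : realType.

Definition moment (n : nat) (w : 'I_n -> R) (j : nat) : R :=
  n%:R^-1 * \sum_(i < n) w i ^+ j.

Variables (nL nR : nat) (wL : 'I_nL -> R) (wR : 'I_nR -> R).

Definition edge_prob (e : 'I_nL * 'I_nR) : R :=
  Num.min (wL e.1 * wR e.2 / (nR%:R * moment wR 1)) 1.

Definition bip_weight (Eb : {set 'I_nL * 'I_nR}) : R :=
  \prod_(e : 'I_nL * 'I_nR)
     (if e \in Eb then edge_prob e else 1 - edge_prob e).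

Definition proj_adj (Eb : {set 'I_nL * 'I_nR}) (x y : 'I_nL) : bool :=
  (x != y) && [exists z : 'I_nR, ((x, z) \in Eb) && ((y, z) \in Eb)].

Definition triangle_prob (u u1 u2 : 'I_nL) : R :=
  \sum_(Eb : {set 'I_nL * 'I_nR} |
          [&& proj_adj Eb u u1, proj_adj Eb u u2 & proj_adj Eb u1 u2])
     bip_weight Eb.

Definition pxy (x y : 'I_nL) : R :=
  moment wR 2 / moment wR 1 ^+ 2 * (wL x * wL y / nR%:R).

End Model.

From HB Require Import structures.
From mathcomp Require Import all_boot all_order all_algebra.
From mathcomp Require Import all_classical all_reals all_analysis.
From mathcomp Require Import ring lra.
Import Order.TTheory GRing.Theory Num.Theory.
Import numFieldNormedType.Exports.
Local Open Scope ring_scope.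

(* For fixed weights the proof is exact and non-asymptotic.  Writing q_z for
   the probability that the right node z is a common neighbour of u, u1, u2
   and S = sum_z q_z, the triangle event contains "some common neighbour"
   and is contained in "some common neighbour, or three distinct right nodes
   witnessing the three projected edges".  The second-order Bonferroni
   inequality and a union bound, combined with the independence of distinct
   bipartite edges, give
       S - S^2 <= Pr[triangle] <= S + p_{uu1} p_{uu2} p_{u1u2},
   where S equals the main term of the theorem and S <= p_{u1u2}.  Hence the
   probability is S (1 + e1) + e2 p_{uu1} p_{uu2} with |e1|, |e2| <= p_{u1u2}.
   Finally, Assumption 2 yields p_{u1u2} = O(n_R^(-2 delta)), so both error
   sequences tend to 0. *)

Section RandomSubset.
Context {R : realDomainType} {T : finType} (p : T -> R).

(* Probability of the subset A when every e is kept independently with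
   probability p e; bip_weight of the model is the instance T = L x R. *)
Definition subset_weight (A : {set T}) : R :=
  \prod_e (if e \in A then p e else 1 - p e).

Definition expect (f : {set T} -> R) : R := \sum_A subset_weight A * f A.

Definition covers (A : {set T}) (s : seq T) : bool := all (fun e => e \in A) s.

Lemma expect0 : expect (fun _ => 0) = 0.
Proof. by rewrite /expect big1 // => A _; rewrite mulr0. Qed.

Lemma expectD (f g : {set T} -> R) :
  expect (fun A => f A + g A) = expect f + expect g.
Proof. by rewrite /expect -big_split; apply: eq_bigr => A _; rewrite mulrDr. Qed.

Lemma expectB (f g : {set T} -> R) :
  expect (fun A => f A - g A) = expect f - expect g.
Proof. by rewrite /expect -sumrB; apply: eq_bigr => A _; rewrite mulrBr. Qed.

Lemma expect_sum (I : finType) (P : pred I) (F : I -> {set T} -> R) :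
  expect (fun A => \sum_(i | P i) F i A) = \sum_(i | P i) expect (F i).
Proof.
rewrite /expect exchange_big /=; apply: eq_bigr => A _; exact: mulr_sumr.
Qed.

Lemma covers_prod (A : {set T}) (s : seq T) :
  (covers A s)%:R = \prod_e ((e \in A) || (e \notin s))%:R :> R.
Proof.
have [covAs|/allPn[e es eNA]] := boolP (covers A s).
  rewrite big1 // => e _; case: (boolP (e \in s)) => [es|]; last by rewrite orbT.
  by rewrite (allP covAs e es).
by rewrite (bigD1 e) //= (negbTE eNA) es mul0r.
Qed.

Lemma covers_cat (A : {set T}) (s t : seq T) :
  (covers A (s ++ t))%:R = (covers A s)%:R * (covers A t)%:R :> R.
Proof. by rewrite /covers all_cat -natrM mulnb. Qed.

Lemma expect_covers (s : seq T) :
  uniq s -> expect (fun A => (covers A s)%:R) = \prod_(e <- s) p e.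
Proof.
move=> s_uniq; pose G e := if e \in s then 0 else 1 - p e.
transitivity (\sum_(A : {set T}) \prod_e (if e \in A then p e else G e)).
  apply: eq_bigr => A _; rewrite covers_prod -big_split /=.
  apply: eq_bigr => e _; rewrite /G.
  by case: (e \in A); case: (e \in s); rewrite /= ?mulr1 ?mulr0.
transitivity (\prod_e (p e + G e)); first by rewrite (bigA_distr 1 +%R p G).
rewrite (big_uniq _ s_uniq) [RHS]big_mkcond /=.
by apply: eq_bigr => e _; rewrite /G; case: (e \in s); rewrite ?addr0 ?subrKC.
Qed.

Hypothesis p01 : forall e, 0 <= p e <= 1.

Lemma subset_weight_ge0 (A : {set T}) : 0 <= subset_weight A.
Proof.
apply: prodr_ge0 => e _; have /andP[pe0 pe1] := p01 e.
by case: (e \in A); rewrite ?subr_ge0.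
Qed.

Lemma ler_expect {f g : {set T} -> R} :
  (forall A, f A <= g A) -> expect f <= expect g.
Proof. by move=> fg; apply: ler_sum => A _; rewrite ler_wpM2l ?subset_weight_ge0. Qed.

End RandomSubset.

Lemma bonferroni_exists {R : realDomainType} {I : finType} (b : I -> bool) :
  \sum_i (b i)%:R - \sum_i \sum_(j | j != i) (b i)%:R * (b j)%:R
    <= ([exists i, b i])%:R :> R.
Proof.
set m := \sum_i (b i)%:R.
have pairs : \sum_i \sum_(j | j != i) (b i)%:R * (b j)%:R = m * m - m :> R.
  rewrite mulr_suml -sumrB; apply: eq_bigr => i _.
  rewrite /m [in RHS](bigD1 i) //= mulrDr -mulr_sumr.
  by case: (b i) => /=; ring.
rewrite pairs; case: (boolP [exists i, b i]) => [_|/existsPn noB].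
  by have := sqr_ge0 (m - 1); rewrite /= mulr1n; nra.
by rewrite /m big1 ?mul0r ?subrr ?subr0 // => i _; rewrite (negbTE (noB i)).
Qed.

Lemma split_error {R : realFieldType} (T S P p : R) :
  0 <= S <= p -> 0 <= P -> S - S ^+ 2 <= T <= S + P * p ->
  exists e1 e2 : R, `|e1| <= p /\ `|e2| <= p /\ T = S * (1 + e1) + e2 * P.
Proof.
move=> /andP[S_ge0 S_le] P_ge0 /andP[T_low T_up].
have p_ge0 : 0 <= p := le_trans S_ge0 S_le.
have [T_le|S_lt] := lerP T S.
  have [S0|S_neq0] := eqVneq S 0.
    exists 0, 0; rewrite normr0 p_ge0; do 2!split=> //.
    by move: T_low T_le; rewrite S0 expr0n /= subr0 => ? ?; lra.
  have S_gt0 : 0 < S by rewrite lt0r S_neq0.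
  set e1 := (T - S) / S; have e1S : e1 * S = T - S by rewrite /e1 divfK.
  exists e1, 0; rewrite normr0 p_ge0; split; last by split=> //; nra.
  by rewrite ler_norml; apply/andP; split; nra.
have P_gt0 : 0 < P by rewrite lt0r; apply/andP; split=> //; apply/eqP => P0; nra.
set e2 := (T - S) / P; have e2P : e2 * P = T - S by rewrite /e2 divfK ?gt_eqF.
exists 0, e2; rewrite normr0 p_ge0; split=> //; split; last by nra.
by rewrite ler_norml; apply/andP; split; nra.
Qed.

Lemma exists_le_sum {R : numDomainType} {I : finType} (b : I -> bool) :
  ([exists i, b i])%:R <= \sum_i (b i)%:R :> R.
Proof.
case: (boolP [exists i, b i]) => [/existsP[i bi]|_]; last exact: sumr_ge0.
by rewrite (bigD1 i) //= bi lerDl sumr_ge0.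
Qed.

(* n M_j is the sum of j-th powers (both sides vanish when n = 0). *)
Lemma sum_pow_moment {R : realType} {n : nat} (w : 'I_n -> R) (j : nat) :
  \sum_i w i ^+ j = n%:R * moment w j.
Proof.
rewrite /moment mulrA; case: n w => [|n] w; first by rewrite !big_ord0 mulr0.
by rewrite mulfV ?mul1r ?pnatr_eq0.
Qed.

Lemma moment_gt0 {R : realType} {n : nat} (w : 'I_n -> R) (j : nat) :
  (0 < n)%N -> (forall i, 0 < w i) -> 0 < moment w j.
Proof.
move=> n_gt0 w_gt0; rewrite /moment mulr_gt0 ?invr_gt0 ?ltr0n //.
rewrite (bigD1 (Ordinal n_gt0)) //= ltr_pwDl ?exprn_gt0 //.
by apply: sumr_ge0 => i _; rewrite exprn_ge0 // ltW.
Qed.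

Section Triangle.
Context {R : realType} {nL nR : nat} {wL : 'I_nL -> R} {wR : 'I_nR -> R}.
Context {u u1 u2 : 'I_nL}.
Hypothesis wL_gt0 : forall i, 0 < wL i.
Hypothesis wR_gt0 : forall j, 0 < wR j.
Hypothesis prob_le1 : forall i j, wL i * wR j / (nR%:R * moment wR 1) <= 1.
Hypothesis distinct_nodes : [/\ u != u1, u != u2 & u1 != u2].

Let u_u1 : u != u1. Proof. by case: distinct_nodes. Qed.
Let u_u2 : u != u2. Proof. by case: distinct_nodes. Qed.
Let u1_u2 : u1 != u2. Proof. by case: distinct_nodes. Qed.
Let u1_u : u1 != u. Proof. by rewrite eq_sym. Qed.
Let u2_u : u2 != u. Proof. by rewrite eq_sym. Qed.
Let u2_u1 : u2 != u1. Proof. by rewrite eq_sym. Qed.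

Let left_neqE := (negbTE u_u1, negbTE u_u2, negbTE u1_u2,
                  negbTE u1_u, negbTE u2_u, negbTE u2_u1).

Local Notation n := (nR%:R : R).
Local Notation M j := (moment wR j).
Local Notation E := (expect (edge_prob wL wR)).

(* Under Assumption 1 the edge probability is the uncapped product. *)
Let a (x : 'I_nL) (z : 'I_nR) : R := wL x * wR z / (n * M 1).

Lemma edge_probE x z : edge_prob wL wR (x, z) = a x z.
Proof. by rewrite /edge_prob /= min_l ?prob_le1. Qed.

Lemma edge_prob_ge0 x z : 0 <= a x z.
Proof.
have M1_ge0 : 0 <= M 1.
  by rewrite /moment mulr_ge0 ?invr_ge0 // sumr_ge0 // => i _; rewrite expr1 ltW.
by rewrite /a divr_ge0 ?(mulr_ge0 (ler0n _ _) M1_ge0) // mulr_ge0 ?ltW.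
Qed.

Lemma edge_prob2_ge0 x y z : 0 <= a x z * a y z.
Proof. exact: mulr_ge0 (edge_prob_ge0 x z) (edge_prob_ge0 y z). Qed.

Lemma edge_prob01 e : 0 <= edge_prob wL wR e <= 1.
Proof. by case: e => x z; rewrite edge_probE edge_prob_ge0 prob_le1. Qed.

Lemma sum_edge_prob2 x y : \sum_z a x z * a y z = pxy wL wR x y.
Proof.
have [n0|nR_gt0] := posnP nR.
  have n_eq0 : n = 0 by rewrite n0.
  rewrite big1 => [|[z hz] _]; last by exfalso; rewrite n0 in hz.
  by rewrite /pxy n_eq0 invr0 !mulr0.
have n_neq0 : n != 0 by rewrite pnatr_eq0 -lt0n.
have [M1_neq0 M2_neq0] : M 1 != 0 /\ M 2 != 0 by rewrite !gt_eqF ?moment_gt0.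
transitivity (wL x * wL y / (n * M 1) ^+ 2 * \sum_z wR z ^+ 2).
  by rewrite mulr_sumr; apply: eq_bigr => z _; rewrite /a; field; rewrite ?M1_neq0 ?n_neq0.
by rewrite sum_pow_moment /pxy; field; rewrite ?M1_neq0 ?M2_neq0 ?n_neq0.
Qed.

Let q (z : 'I_nR) : R := a u z * a u1 z * a u2 z.

Lemma q_ge0 z : 0 <= q z.
Proof. exact: mulr_ge0 (edge_prob2_ge0 _ _ _) (edge_prob_ge0 _ _). Qed.

Lemma sum_edge_prob3 : \sum_z q z =
  pxy wL wR u u1 * pxy wL wR u u2 * (M 1 * M 3 / M 2 ^+ 2) * (wL u)^-1.
Proof.
have [n0|nR_gt0] := posnP nR.
  have n_eq0 : n = 0 by rewrite n0.
  rewrite big1 => [|[z hz] _]; last by exfalso; rewrite n0 in hz.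
  by rewrite /pxy n_eq0 invr0 !mulr0 !mul0r.
have n_neq0 : n != 0 by rewrite pnatr_eq0 -lt0n.
have [M1_neq0 M2_neq0] : M 1 != 0 /\ M 2 != 0 by rewrite !gt_eqF ?moment_gt0.
have wu_neq0 : wL u != 0 by rewrite gt_eqF.
transitivity (wL u * wL u1 * wL u2 / (n * M 1) ^+ 3 * \sum_z wR z ^+ 3).
  by rewrite mulr_sumr; apply: eq_bigr => z _; rewrite /q /a; field; rewrite ?M1_neq0 ?n_neq0.
by rewrite sum_pow_moment /pxy; field; rewrite ?M1_neq0 ?M2_neq0 ?n_neq0 ?wu_neq0.
Qed.

Let star (z : 'I_nR) : seq ('I_nL * 'I_nR) := [:: (u, z); (u1, z); (u2, z)].

Let wedges (z1 z2 z3 : 'I_nR) : seq ('I_nL * 'I_nR) :=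
  [:: (u, z1); (u1, z1); (u, z2); (u2, z2); (u1, z3); (u2, z3)].

Let distinct3 (z1 z2 z3 : 'I_nR) : bool := [&& z1 != z2, z1 != z3 & z2 != z3].

Let triangle (A : {set 'I_nL * 'I_nR}) : bool :=
  [&& proj_adj A u u1, proj_adj A u u2 & proj_adj A u1 u2].

Lemma star_triangle A z : covers A (star z) -> triangle A.
Proof.
case/and4P=> uz u1z u2z _; rewrite /triangle /proj_adj u_u1 u_u2 u1_u2 /=.
by apply/and3P; split; apply/existsP; exists z; apply/andP; split.
Qed.

Lemma triangle_witnesses A : triangle A ->
  [exists z, covers A (star z)] \/
  [exists z1, exists z2, exists z3,
     distinct3 z1 z2 z3 && covers A (wedges z1 z2 z3)].
Proof.
case/and3P=> /andP[_ /existsP[z1 /andP[uz1 u1z1]]]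
  /andP[_ /existsP[z2 /andP[uz2 u2z2]]] /andP[_ /existsP[z3 /andP[u1z3 u2z3]]].
have [|/existsPn noStar] := boolP [exists z, covers A (star z)]; [by left|right].
apply/existsP; exists z1; apply/existsP; exists z2; apply/existsP; exists z3.
rewrite /covers /= uz1 u1z1 uz2 u2z2 u1z3 u2z3 !andbT.
apply/and3P; split; apply/negP => /eqP z_eq.
- by move: (noStar z1); rewrite /covers /= uz1 u1z1 z_eq u2z2.
- by move: (noStar z1); rewrite /covers /= uz1 u1z1 z_eq u2z3.
- by move: (noStar z2); rewrite /covers /= uz2 z_eq u1z3 u2z3.
Qed.

Lemma expect_star (z : 'I_nR) : E (fun A => (covers A (star z))%:R) = q z.
Proof.
rewrite expect_covers; last by rewrite /= !inE !xpair_eqE !left_neqE.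
by rewrite !big_cons big_nil !edge_probE mulr1 mulrA.
Qed.

Lemma expect_star_pair (z z' : 'I_nR) : z != z' ->
  E (fun A => (covers A (star z))%:R * (covers A (star z'))%:R) = q z * q z'.
Proof.
move=> /negbTE z_z'; have z'_z : (z' == z) = false by rewrite eq_sym.
transitivity (E (fun A => (covers A (star z ++ star z'))%:R)).
  by apply: eq_bigr => A _; rewrite covers_cat.
rewrite expect_covers; last by rewrite /= !inE !xpair_eqE !left_neqE ?z_z' ?z'_z ?andbF.
by rewrite !big_cons big_nil !edge_probE mulr1 /q !mulrA.
Qed.

Lemma expect_wedges (z1 z2 z3 : 'I_nR) : distinct3 z1 z2 z3 ->
  E (fun A => (covers A (wedges z1 z2 z3))%:R) =
  (a u z1 * a u1 z1) * (a u z2 * a u2 z2) * (a u1 z3 * a u2 z3).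
Proof.
case/and3P=> /negbTE z12 /negbTE z13 /negbTE z23.
have [z21 z31 z32] : [/\ (z2 == z1) = false, (z3 == z1) = false & (z3 == z2) = false].
  by split; rewrite eq_sym.
rewrite expect_covers; last first.
  by rewrite /= !inE !xpair_eqE !left_neqE ?z12 ?z13 ?z23 ?z21 ?z31 ?z32 ?andbF.
by rewrite !big_cons big_nil !edge_probE mulr1 !mulrA.
Qed.

Let common_count (A : {set 'I_nL * 'I_nR}) : R := \sum_z (covers A (star z))%:R.
Let common_pairs (A : {set 'I_nL * 'I_nR}) : R :=
  \sum_z \sum_(z' | z' != z) (covers A (star z))%:R * (covers A (star z'))%:R.

Let wedge_count (A : {set 'I_nL * 'I_nR}) : R :=
  \sum_z1 \sum_z2 \sum_z3 (distinct3 z1 z2 z3 && covers A (wedges z1 z2 z3))%:R.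

Lemma triangle_ind_lower A : common_count A - common_pairs A <= (triangle A)%:R.
Proof.
apply: le_trans (bonferroni_exists (fun z => covers A (star z))) _.
by case: (boolP [exists z, _]) => [/existsP[z /star_triangle ->]|_].
Qed.

Lemma triangle_ind_upper A : (triangle A)%:R <= common_count A + wedge_count A.
Proof.
rewrite /common_count /wedge_count; set S1 := \sum_z _; set S3 := \sum_z1 _.
have S1_ge0 : 0 <= S1 by apply: sumr_ge0.
have S3_ge0 : 0 <= S3 by do 3!(apply: sumr_ge0 => ? _).
have [/triangle_witnesses[starA|wedgesA]|_] := boolP (triangle A); last exact: addr_ge0.
  by have := @exists_le_sum R _ (fun z => covers A (star z)); rewrite starA mulr1n -/S1; lra.
have : ([exists z1, exists z2, exists z3,
     distinct3 z1 z2 z3 && covers A (wedges z1 z2 z3)])%:R <= S3 :> R.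
  apply: le_trans (exists_le_sum (R := R) _) _; apply: ler_sum => z1 _.
  apply: le_trans (exists_le_sum (R := R) _) _; apply: ler_sum => z2 _.
  exact: exists_le_sum.
by rewrite wedgesA mulr1n; lra.
Qed.

Let S : R := \sum_z q z.

Lemma triangle_probE :
  triangle_prob wL wR u u1 u2 = E (fun A => (triangle A)%:R).
Proof.
rewrite /triangle_prob big_mkcond; apply: eq_bigr => A _.
by rewrite /triangle; case: (_ && _); rewrite ?mulr1 ?mulr0.
Qed.

Lemma expect_common_count : E common_count = S.
Proof. by rewrite /common_count expect_sum; apply: eq_bigr => z _; rewrite expect_star. Qed.

(* Pairs of distinct common neighbours occur with probability q_z q_z'. *)
Lemma expect_common_pairs : E common_pairs <= S ^+ 2.
Proof.
rewrite /common_pairs expect_sum expr2 /S mulr_suml; apply: ler_sum => z _.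
rewrite expect_sum mulr_sumr [leRHS](bigD1 z) //=.
apply: ler_wpDl; first exact: mulr_ge0 (q_ge0 z) (q_ge0 z).
by apply: ler_sum => z' z'z; rewrite expect_star_pair // eq_sym.
Qed.

Lemma triangle_prob_lower : S - S ^+ 2 <= triangle_prob wL wR u u1 u2.
Proof.
rewrite triangle_probE; apply: le_trans (ler_expect _ edge_prob01 triangle_ind_lower).
by rewrite expectB expect_common_count lerB // expect_common_pairs.
Qed.

(* Independence of the six edges bounds the expected number of witness
   triples by p_{uu1} p_{uu2} p_{u1u2}. *)
Lemma expect_wedge_count :
  E wedge_count <= pxy wL wR u u1 * pxy wL wR u u2 * pxy wL wR u1 u2.
Proof.
rewrite /wedge_count -!sum_edge_prob2 expect_sum !mulr_suml; apply: ler_sum => z1 _.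
rewrite expect_sum [X in X * _]mulr_sumr mulr_suml; apply: ler_sum => z2 _.
rewrite expect_sum mulr_sumr; apply: ler_sum => z3 _.
have [dz|_] := boolP (distinct3 z1 z2 z3); first by rewrite expect_wedges.
rewrite expect0; exact: mulr_ge0 (mulr_ge0 (edge_prob2_ge0 _ _ _)
  (edge_prob2_ge0 _ _ _)) (edge_prob2_ge0 _ _ _).
Qed.

Lemma triangle_prob_upper : triangle_prob wL wR u u1 u2 <=
  S + pxy wL wR u u1 * pxy wL wR u u2 * pxy wL wR u1 u2.
Proof.
rewrite triangle_probE; apply: le_trans (ler_expect _ edge_prob01 triangle_ind_upper) _.
by rewrite expectD expect_common_count lerD2l expect_wedge_count.
Qed.

Lemma common_prob_le : 0 <= S <= pxy wL wR u1 u2.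
Proof.
rewrite sumr_ge0 //= -?sum_edge_prob2; last by move=> z _; exact: q_ge0.
apply: ler_sum => z _; rewrite /q -mulrA.
by rewrite ler_piMl ?edge_prob2_ge0 ?prob_le1.
Qed.

Lemma triangle_prob_expansion : exists e1 e2 : R,
  `|e1| <= pxy wL wR u1 u2 /\ `|e2| <= pxy wL wR u1 u2 /\
  triangle_prob wL wR u u1 u2 =
    pxy wL wR u u1 * pxy wL wR u u2 * (M 1 * M 3 / M 2 ^+ 2) * (wL u)^-1 * (1 + e1)
    + e2 * (pxy wL wR u u1 * pxy wL wR u u2).
Proof.
rewrite -sum_edge_prob3; apply: split_error; first exact: common_prob_le.
  by rewrite -!sum_edge_prob2 mulr_ge0 // sumr_ge0 // => z _; exact: edge_prob2_ge0.
by rewrite triangle_prob_lower triangle_prob_upper.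
Qed.

End Triangle.

Local Open Scope classical_set_scope.

Lemma pxy_decay {R : realType} {nL nR : nat} {wL : 'I_nL -> R} {wR : 'I_nR -> R}
    {delta C C2 : R} (x y : 'I_nL) :
  (0 < nR)%N -> (forall i, 0 < wL i) -> (forall j, 0 < wR j) ->
  wL x <= C * nR%:R `^ (2^-1 - delta) -> wL y <= C * nR%:R `^ (2^-1 - delta) ->
  moment wR 2 <= C2 * moment wR 1 ^+ 2 ->
  pxy wL wR x y * nR%:R `^ (2 * delta) <= C2 * C ^+ 2.
Proof.
move=> nR_gt0 wL_gt0 wR_gt0 wx_le wy_le M2_le.
set n : R := nR%:R; set na := n `^ (2^-1 - delta).
have n_gt0 : 0 < n by rewrite ltr0n.
have n_neq0 : n != 0 by rewrite gt_eqF.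
have [M1_gt0 M2_gt0] := (moment_gt0 wR 1 nR_gt0 wR_gt0, moment_gt0 wR 2 nR_gt0 wR_gt0).
have moments_le : moment wR 2 / moment wR 1 ^+ 2 <= C2.
  by rewrite ler_pdivrMr ?exprn_gt0.
have weights_le : wL x * wL y <= C ^+ 2 * (na * na).
  by rewrite expr2 mulrACA ler_pM // ltW.
have na2 : na * na * n `^ (2 * delta) = n.
  rewrite /na -powRD ?n_neq0 ?implybT // -powRD ?n_neq0 ?implybT //.
  by rewrite -[RHS]powRr1 ?ltW //; congr (_ `^ _); field.
have -> : pxy wL wR x y * n `^ (2 * delta) =
          moment wR 2 / moment wR 1 ^+ 2 * (wL x * wL y) * (n `^ (2 * delta) / n).
  by rewrite /pxy; field; rewrite n_neq0 gt_eqF.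
apply: le_trans (_ : C2 * (C ^+ 2 * (na * na)) * (n `^ (2 * delta) / n) <= _).
  apply: ler_wpM2r; first by rewrite divr_ge0 ?powR_ge0 ?ltW.
  by apply: ler_pM => //; [rewrite divr_ge0 ?exprn_ge0 ?ltW | rewrite mulr_ge0 ?ltW].
have -> : C2 * (C ^+ 2 * (na * na)) * (n `^ (2 * delta) / n) =
          C2 * C ^+ 2 * (na * na * n `^ (2 * delta)) / n by ring.
by rewrite na2 mulfK.
Qed.

Lemma powR_unbounded {R : realType} {r : R} (B : R) :
  0 < r -> exists M : nat, forall x, M%:R <= x -> B < x `^ r.
Proof.
move=> r_gt0; set b := `|B| `^ r^-1.
exists (Num.truncn b).+1 => x Mx.
have b_lt_x : b < x := lt_le_trans (truncnS_gt b) Mx.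
have bB : b `^ r = `|B|.
  by rewrite /b -powRrM mulVf ?gt_eqF // powRr1.
apply: le_lt_trans (ler_norm B) _; rewrite -bB gt0_ltr_powR //.
- by rewrite nnegrE powR_ge0.
- by rewrite nnegrE (le_trans (powR_ge0 _ _) (ltW b_lt_x)).
Qed.

Lemma pxy_small {R : realType} {delta : R} {nL nR : nat -> nat}
    {wL : forall k, 'I_(nL k) -> R} {wR : forall k, 'I_(nR k) -> R}
    (x y : forall k, 'I_(nL k)) :
  0 < delta -> (forall k i, 0 < wL k i) -> (forall k j, 0 < wR k j) ->
  (forall M : nat, exists N, forall k, (N <= k)%N -> (M <= nR k)%N) ->
  (exists C : R, 0 < C /\ exists N, forall k, (N <= k)%N ->
      forall i, wL k i <= C * (nR k)%:R `^ (2^-1 - delta)) ->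
  (exists C : R, 0 < C /\ exists N, forall k, (N <= k)%N ->
      moment (wR k) 2 <= C * moment (wR k) 1 ^+ 2) ->
  forall e : R, 0 < e -> \forall k \near \oo, pxy (wL k) (wR k) (x k) (y k) < e.
Proof.
move=> delta_gt0 wL_gt0 wR_gt0 nR_big [C [_ [N1 w_le]]] [C2 [_ [N2 M2_le]]] e e_gt0.
have [M powR_big] := powR_unbounded (C2 * C ^+ 2 / e) (mulr_gt0 (ltr0Sn R 1) delta_gt0).
have [N3 nR_ge] := nR_big (maxn M 1).
exists (maxn N1 (maxn N2 N3)) => // k; rewrite /= !geq_max => /and3P[k1 k2 k3].
have := nR_ge k k3; rewrite geq_max => /andP[M_le nR_gt0].
have decay := pxy_decay (x k) (y k) nR_gt0 (wL_gt0 k) (wR_gt0 k)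
  (w_le k k1 _) (w_le k k1 _) (M2_le k k2).
have := powR_big (nR k)%:R; rewrite ler_nat ltr_pdivrMr // => /(_ M_le) big.
have P_gt0 : 0 < (nR k)%:R `^ (2 * delta) by rewrite powR_gt0 // ltr0n.
by rewrite -(ltr_pM2r P_gt0); apply: le_lt_trans decay _; rewrite [e * _]mulrC.
Qed.

Lemma cvg0_dominated {R : realType} (f g : nat -> R) :
  (forall k, `|f k| <= g k) -> (forall e, 0 < e -> \forall k \near \oo, g k < e) ->
  f @ \oo --> 0.
Proof.
move=> fg g_small; apply/cvgr0Pnorm_lt => e /g_small.
by apply: filterS => k; exact: le_lt_trans (fg k).
Qed.

Theorem mainTheorem8 (R : realType) (delta : R) (nL nR : nat -> nat)
  (wL : forall k, 'I_(nL k) -> R) (wR : forall k, 'I_(nR k) -> R)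
  (u u1 u2 : forall k, 'I_(nL k)) :
  (* delta > 1/10 *)
  10%:R^-1 < delta ->
  (* weights are positive reals *)
  (forall k i, 0 < wL k i) -> (forall k j, 0 < wR k j) ->
  (* Assumption 1 *)
  (forall k i j, wL k i * wR k j / ((nR k)%:R * moment (wR k) 1) <= 1) ->
  (* Assumption 2: n_L, n_R -> oo *)
  (forall M : nat, exists N, forall k, (N <= k)%N -> (M <= nL k)%N /\ (M <= nR k)%N) ->
  (* max(S_L u S_R) = O(n_R^(1/2 - delta)) *)
  (exists C : R, 0 < C /\ exists N, forall k, (N <= k)%N ->
      (forall i, wL k i <= C * (nR k)%:R `^ (2^-1 - delta)) /\
      (forall j, wR k j <= C * (nR k)%:R `^ (2^-1 - delta))) ->
  (* min S_L = Omega(1) *)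
  (exists c : R, 0 < c /\ exists N, forall k, (N <= k)%N -> forall i, c <= wL k i) ->
  (* M_R2 = O(M_R1^2) *)
  (exists C : R, 0 < C /\ exists N, forall k, (N <= k)%N ->
      moment (wR k) 2 <= C * moment (wR k) 1 ^+ 2) ->
  (* M_R4 = O(n_R^(1 - 2 delta)) *)
  (exists C : R, 0 < C /\ exists N, forall k, (N <= k)%N ->
      moment (wR k) 4 <= C * (nR k)%:R `^ (1 - 2 * delta)) ->
  (* u, u1, u2 distinct *)
  (forall k, [/\ u k != u1 k, u k != u2 k & u1 k != u2 k]) ->
  exists eps eta : nat -> R,
    eps @ \oo --> (0 : R) /\ eta @ \oo --> (0 : R) /\
    forall k,
      triangle_prob (wL k) (wR k) (u k) (u1 k) (u2 k) =
        pxy (wL k) (wR k) (u k) (u1 k) * pxy (wL k) (wR k) (u k) (u2 k)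
        * (moment (wR k) 1 * moment (wR k) 3 / moment (wR k) 2 ^+ 2)
        * (wL k (u k))^-1 * (1 + eps k)
      + eta k * (pxy (wL k) (wR k) (u k) (u1 k) * pxy (wL k) (wR k) (u k) (u2 k)).
Proof.
move=> delta_gt wL_gt0 wR_gt0 prob_le1 n_big [C [C_gt0 [N w_le]]] _ M2_le _ distinct.
have delta_gt0 : 0 < delta by apply: lt_trans delta_gt; rewrite invr_gt0 ltr0n.
have nR_big M : exists N, forall k, (N <= k)%N -> (M <= nR k)%N.
  by have [N' nN] := n_big M; exists N' => k /nN[].
have wL_le : exists C : R, 0 < C /\ exists N, forall k, (N <= k)%N ->
    forall i, wL k i <= C * (nR k)%:R `^ (2^-1 - delta).
  by exists C; split=> //; exists N => k /w_le[].
have p12_small := pxy_small u1 u2 delta_gt0 wL_gt0 wR_gt0 nR_big wL_le M2_le.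
have /boolp.choice[eps /boolp.choice[eta expansion]] := fun k =>
  triangle_prob_expansion (wL_gt0 k) (wR_gt0 k) (prob_le1 k) (distinct k).
exists eps, eta; split; [|split].
- by apply: cvg0_dominated p12_small => k; case: (expansion k).
- by apply: cvg0_dominated p12_small => k; case: (expansion k) => _ [].
- by move=> k; case: (expansion k) => _ [].
Qed.
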